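(* Let $\mathcal{S}$ be a semi-primitive subspace of $\mathrm{Mat}_{m,n}(\mathbb{K})$ with $\#\mathbb{K}>\mathrm{urk}(\mathcal{S})$ and $n>0$. Then $\mathcal{S}$ has the column property.
   Context: $\mathrm{urk}$ is the maximal rank of a matrix in the space. Matrix spaces are equivalent ($\sim$) if $\mathcal{M}=P\mathcal{M}'Q$ with $P,Q$ invertible. A subspace is defective if none of its matrices has rank equal to its number of columns. $\mathcal{S}$ is $(r,s)$-decomposed ($0\le r\le m$, $1\le s\le n$) if every $M\in\mathcal{S}$ is of the form $\begin{bmatrix} ?_{r\times s}& C(M)\\ B(M)&0_{(m-r)\times(n-s)}\end{bmatrix}$, with lower space $B(\mathcal{S})$; $\mathcal{S}$ has the column property if for every such $(r,s)$ and every $(r,s)$-decomposed $\mathcal{S}'\sim\mathcal{S}$, the lower space of $\mathcal{S}'$ is defective. For an operator space $\mathcal{T}\subseteq\mathcal{L}(U,V)$: $\mathcal{T}$ is reduced if $\bigcap_{f}\ker f=\{0\}$ and $\sum_f\mathrm{im} f=V$; $c$-defective if $\dim\ker f\geq c$ for all $f\in\mathcal{T}$; its defectiveness index is the greatest such $c$; semi-primitive if reduced and there is no linear hyperplane $U'$ of $U$ with $\{f_{|U'}\mid f\in\mathcal{T}\}$ $c$-defective, $c$ being the defectiveness index. A matrix space is semi-primitive if the corresponding subspace of $\mathcal{L}(\mathbb{K}^n,\mathbb{K}^m)$ is. *)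

From HB Require Import structures.
From mathcomp Require Import all_boot all_order all_algebra.
Set Implicit Arguments. Unset Strict Implicit. Unset Printing Implicit Defensive.
Import GRing.Theory.
Local Open Scope ring_scope.

(* A linear subspace of Mat_{m,n}(K) is represented, as in mxalgebra, by the
   row space of a matrix S : 'M[K]_(k, m * n) whose rows are the vectorised
   (mxvec) matrices spanning the subspace. *)
Definition inS (K : fieldType) (m n k : nat) (S : 'M[K]_(k, m * n))
  (M : 'M[K]_(m, n)) : Prop := (mxvec M <= S)%MS.

Definition card_gt (K : fieldType) (r : nat) : Prop :=
  exists f : 'I_r.+1 -> K, injective f.

Definition is_urk (K : fieldType) (m n k : nat) (S : 'M[K]_(k, m * n))
  (r : nat) : Prop :=
  (exists2 M, inS S M & \rank M = r) /\ (forall M, inS S M -> (\rank M <= r)%N).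

Definition mxspace_equiv (K : fieldType) (m n k k' : nat)
  (S : 'M[K]_(k, m * n)) (S' : 'M[K]_(k', m * n)) : Prop :=
  exists (P : 'M[K]_m) (Q : 'M[K]_n),
    P \in unitmx /\ Q \in unitmx /\
    forall M, inS S M <-> exists2 M', inS S' M' & M = P *m M' *m Q.

Definition decomposed (K : fieldType) (m n k : nat) (S : 'M[K]_(k, m * n))
  (r s : nat) : Prop :=
  forall M, inS S M -> forall (i : 'I_m) (j : 'I_n),
    (r <= i)%N -> (s <= j)%N -> M i j = 0.

Lemma low_idx_proof (m r : nat) (i : 'I_(m - r)) : (r + i < m)%N.
Proof. by rewrite -ltn_subRL. Qed.

Definition low_idx (m r : nat) (i : 'I_(m - r)) : 'I_m :=
  Ordinal (low_idx_proof i).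

Definition lower_block (K : fieldType) (m n : nat) (r : 'I_m.+1) (s : 'I_n.+1)
  (M : 'M[K]_(m, n)) : 'M[K]_(m - r, s) :=
  \matrix_(i < m - r, j < s) M (low_idx i) (@widen_ord s n (ltn_ord s) j).

Definition lower_defective (K : fieldType) (m n k : nat) (S : 'M[K]_(k, m * n))
  (r : 'I_m.+1) (s : 'I_n.+1) : Prop :=
  forall M, inS S M -> \rank (lower_block r s M) <> s.

Definition column_property (K : fieldType) (m n k : nat)
  (S : 'M[K]_(k, m * n)) : Prop :=
  forall (r : 'I_m.+1) (s : 'I_n.+1), (0 < s)%N ->
  forall (k' : nat) (S' : 'M[K]_(k', m * n)),
    mxspace_equiv S S' -> decomposed S' r s -> lower_defective S' r s.

(* Matrices act on column vectors: M : K^n -> K^m.  ker M is the row kernel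
   of M^T (x^T M^T = 0 iff M x = 0). *)
Definition reduced (K : fieldType) (m n k : nat) (S : 'M[K]_(k, m * n)) : Prop :=
  (forall x : 'cV[K]_n, (forall M, inS S M -> M *m x = 0) -> x = 0) /\
  (forall y : 'cV[K]_m, exists (p : nat) (Ms : 'I_p -> 'M[K]_(m, n))
     (xs : 'I_p -> 'cV[K]_n),
     (forall i, inS S (Ms i)) /\ y = \sum_(i < p) Ms i *m xs i).

Definition c_defective (K : fieldType) (m n k : nat) (S : 'M[K]_(k, m * n))
  (c : nat) : Prop :=
  forall M, inS S M -> (c <= \rank (kermx M^T))%N.

Definition defect_index (K : fieldType) (m n k : nat) (S : 'M[K]_(k, m * n))
  (c : nat) : Prop :=
  c_defective S c /\ forall c', c_defective S c' -> (c' <= c)%N.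

(* Restrictions to a hyperplane U' (row space of H, of rank n-1):
   ker (M|U') = ker M :&: U'. *)
Definition semi_primitive (K : fieldType) (m n k : nat)
  (S : 'M[K]_(k, m * n)) : Prop :=
  reduced S /\
  forall c, defect_index S c ->
  forall H : 'M[K]_n, \rank H = n.-1 ->
    ~ (forall M, inS S M -> (c <= \rank (kermx M^T :&: H)%MS)%N).

From HB Require Import structures.
From mathcomp Require Import all_boot all_order all_algebra.
From mathcomp Require Import perm zify.

(* Let S' ~ S be (r,s)-decomposed with s > 0, and suppose, for a contradiction,
   that some M0 in S' has a lower block B(M0) of full column rank s.  Write
   u = urk(S) = urk(S'); #K > u means K contains u+1 distinct scalars.

   For square A, B the polynomial det('X A + B) has degree at most
      D and coefficient det A in degree D.  Hence if det A = 0 and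
      det(t A + B) = 0 for D distinct scalars t, the polynomial is 0.
   2. Key bound.  For every N in S', rk(right columns of N) + s <= u.  Otherwise
      invertible square submatrices of N (in the right columns) and of B(M0)
      assemble into a square submatrix pencil t Z(M0) + Z(N) of size u+1 that
      is block upper triangular because S' is decomposed; its determinant is
      a product of two nonzero polynomials, contradicting step 1.
   3. Semi-primitivity.  The defectiveness index of S is n - u.  By step 2 the
      kernels of all matrices of S meet the hyperplane Q^-T {x | x_0 = 0}
      (with S = P S' Q) in dimension at least n - u, which semi-primitivity
      forbids. *)

Set Implicit Arguments. Unset Strict Implicit. Unset Printing Implicit Defensive.
Import GRing.Theory.
Local Open Scope ring_scope.

Section Pencil.
Variable K : fieldType.

Definition pencil (p q : nat) (A B : 'M[K]_(p, q)) : 'M[{poly K}]_(p, q) :=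
  \matrix_(i, j) ('X * (A i j)%:P + (B i j)%:P).

Lemma coef_prod_linear (I : Type) (r : seq I) (a b : I -> K) :
  (\prod_(i <- r) ('X * (a i)%:P + (b i)%:P))`_(size r) = \prod_(i <- r) a i /\
  forall j, (size r < j)%N -> (\prod_(i <- r) ('X * (a i)%:P + (b i)%:P))`_j = 0.
Proof.
elim: r => [|x r [IH1 IH2]].
  by rewrite !big_nil coef1; split=> // j Hj; rewrite coef1 -(prednK Hj).
rewrite !big_cons mulrDl -mulrA !coefD coefXM !coefCM /= IH1.
rewrite (IH2 (size r).+1) // mulr0 addr0 mulrC; split=> // -[|j] // Hj.
by rewrite coefD coefXM !coefCM /= !IH2 ?mulr0 ?addr0 // ltnW.
Qed.

(* Expanding the determinant by the Leibniz formula, each term is a product of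
   D linear polynomials, whence both statements below. *)
Lemma coef_det_pencil (D : nat) (A B : 'M[K]_D) :
  (\det (pencil A B))`_D = \det A /\
  forall j, (D < j)%N -> (\det (pencil A B))`_j = 0.
Proof.
have size_enum : size (index_enum 'I_D) = D.
  by rewrite [index_enum _]unlock -enumT size_enum_ord.
have coef_sign (b : bool) (p : {poly K}) i : ((-1) ^+ b * p)`_i = (-1) ^+ b * p`_i.
  by case: b; rewrite ?expr0 ?expr1 ?mul1r ?mulN1r ?coefN.
have coef_term (s : 'S_D) := coef_prod_linear (index_enum 'I_D)
  (fun i => A i (s i)) (fun i => B i (s i)).
rewrite /determinant size_enum in coef_term *; split.
  rewrite coef_sum; apply: eq_bigr => s _; rewrite coef_sign.
  by under eq_bigr do rewrite mxE; rewrite (proj1 (coef_term s)).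
move=> j Hj; rewrite coef_sum big1 // => s _; rewrite coef_sign.
by under eq_bigr do rewrite mxE; rewrite (proj2 (coef_term s)) ?mulr0.
Qed.

Lemma horner_det_pencil (D : nat) (A B : 'M[K]_D) (t : K) :
  (\det (pencil A B)).[t] = \det (t *: A + B).
Proof.
have := det_map_mx (horner_eval t) (pencil A B); rewrite /= horner_evalE => <-.
by congr (\det _); apply/matrixP => i j; rewrite !mxE horner_evalE !hornerE.
Qed.

(* A pencil with B invertible is a nonzero polynomial: its value at 0. *)
Lemma det_pencil_neq0_const (D : nat) (A B : 'M[K]_D) :
  B \in unitmx -> \det (pencil A B) != 0.
Proof.
rewrite unitmxE unitfE; apply: contraNneq => det0.
by have := horner_det_pencil A B 0; rewrite det0 horner0 scale0r add0r => <-.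
Qed.

(* A pencil with A invertible is a nonzero polynomial: its top coefficient. *)
Lemma det_pencil_neq0_lead (D : nat) (A B : 'M[K]_D) :
  A \in unitmx -> \det (pencil A B) != 0.
Proof.
rewrite unitmxE unitfE; apply: contraNneq => det0.
by rewrite -(proj1 (coef_det_pencil A B)) det0 coef0.
Qed.

(* A singular pencil direction A with D distinct singular members t A + B has
   identically vanishing determinant: a nonzero polynomial of degree < D
   cannot have D roots. *)
Lemma det_pencil_eq0 (D : nat) (A B : 'M[K]_D) (t : 'I_D -> K) :
  injective t -> \det A = 0 -> (forall i, \det (t i *: A + B) = 0) ->
  \det (pencil A B) = 0.
Proof.
move=> t_inj detA detAB; apply/eqP; apply: contraT => nz.
have [top high] := coef_det_pencil A B.
have small : (size (\det (pencil A B)) <= D)%N.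
  apply/leq_sizeP => j; rewrite leq_eqVlt => /predU1P [<- | /high //].
  by rewrite top detA.
have roots : all (root (\det (pencil A B))) (map t (enum 'I_D)).
  by apply/allP => _ /mapP [i _ ->]; rewrite /root horner_det_pencil detAB.
have := max_poly_roots nz roots; rewrite map_inj_uniq ?enum_uniq //.
by rewrite size_map size_enum_ord => /(_ isT); rewrite ltnNge small.
Qed.

Lemma det_pencil_ublock (d s : nat) (A1 B1 : 'M[K]_d) (A2 B2 : 'M[K]_(d, s))
    (A4 B4 : 'M[K]_s) :
  \det (pencil (block_mx A1 A2 0 A4) (block_mx B1 B2 0 B4)) =
  \det (pencil A1 B1) * \det (pencil A4 B4).
Proof.
have -> : pencil (block_mx A1 A2 0 A4) (block_mx B1 B2 0 B4) =
    block_mx (pencil A1 B1) (pencil A2 B2) 0 (pencil A4 B4).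
  apply/matrixP => i j; rewrite !mxE.
  case: (split i) => a; rewrite !mxE; case: (split j) => b; rewrite !mxE //.
  by rewrite mulr0 add0r.
exact: det_ublock.
Qed.

End Pencil.

Section Selection.
Variable K : fieldType.

Lemma mulmx_selection (a b p q : nat) (f : 'I_p -> 'I_a) (g : 'I_q -> 'I_b)
    (X : 'M[K]_(a, b)) :
  rowsub f 1%:M *m X *m colsub g 1%:M = mxsub f g X.
Proof.
rewrite -mulmxA mulmx_colsub mulmx1 -rowsubE.
by apply/matrixP => i j; rewrite !mxE.
Qed.

Lemma mxrank_sandwich (a b p q : nat) (L : 'M[K]_(p, a)) (X : 'M[K]_(a, b))
    (R : 'M[K]_(b, q)) :
  (\rank (L *m X *m R) <= \rank X)%N.
Proof. exact: leq_trans (mxrankM_maxl _ _) (mxrankM_maxr _ _). Qed.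

Lemma det_eq0_rank_lt (D : nat) (X : 'M[K]_D) : (\rank X < D)%N -> \det X = 0.
Proof.
move=> lt; apply/eqP; rewrite -[_ == 0]negbK -unitfE -unitmxE -row_free_unit.
by rewrite /row_free neq_ltn lt.
Qed.

Lemma row_free_selection (a d : nat) (f : 'I_d -> 'I_a) :
  injective f -> row_free (rowsub f (1%:M : 'M[K]_a)).
Proof.
move=> f_inj; rewrite /row_free eqn_leq rank_leq_row /=.
have E : rowsub f (1%:M : 'M[K]_a) *m (rowsub f 1%:M)^T = 1%:M.
  rewrite trmx_mxsub trmx1 -[rowsub f 1%:M]mulmx1 mulmx_selection.
  by apply/matrixP => i j; rewrite !mxE (inj_eq f_inj).
by rewrite -{1}(mxrank1 K d) -E mxrankM_maxl.
Qed.

Lemma row_free_rowsub_rank (a b d : nat) (X : 'M[K]_(a, b)) :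
  \rank X = d -> exists f : 'I_d -> 'I_a, row_free (rowsub f X).
Proof. by move=> <-; exists (maxrankfun X); exact: maxrowsub_free. Qed.

Lemma invertible_submx (a b d : nat) (X : 'M[K]_(a, b)) :
  (d <= \rank X)%N ->
  exists (f : 'I_d -> 'I_a) (g : 'I_d -> 'I_b), mxsub f g X \in unitmx.
Proof.
move=> d_le; have [f1 free1] := @row_free_rowsub_rank _ _ _ X erefl.
have widen_inj : injective (widen_ord d_le).
  by move=> x y /(congr1 val) /= /val_inj.
set Y := rowsub (widen_ord d_le) (rowsub f1 X).
have free_Y : row_free Y.
  by rewrite /row_free /Y rowsubE mxrankMfree //; exact: row_free_selection.
have [g free_g] : exists g : 'I_d -> 'I_b, row_free (rowsub g Y^T).
  by apply: row_free_rowsub_rank; rewrite mxrank_tr; exact/eqP.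
exists (f1 \o widen_ord d_le), g.
by rewrite mxsubcr rowsub_comp -unitmx_tr -row_free_unit trmx_mxsub.
Qed.

End Selection.

Section RightColumns.
Variable K : fieldType.

(* The rows e_s, ..., e_(n-1) of the identity: for N : 'M_(m, n), the matrix
   tail_selection n s *m N^T is the transpose of the columns s, ..., n-1 of N. *)
Definition tail_selection (n s : nat) : 'M[K]_(n - s, n) :=
  rowsub (@low_idx n s) 1%:M.

Definition lower_right_zero (m n : nat) (r s : nat) (X : 'M[K]_(m, n)) : Prop :=
  forall (i : 'I_m) (j : 'I_n), (r <= i)%N -> (s <= j)%N -> X i j = 0.

Lemma right_columns_rank_bound (m n u : nat) (r : 'I_m.+1) (s : 'I_n.+1)
    (M0 N : 'M[K]_(m, n)) (t : 'I_u.+1 -> K) :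
  injective t -> (\rank M0 <= u)%N -> (forall c, \rank (c *: M0 + N)%R <= u)%N ->
  lower_right_zero r s M0 -> lower_right_zero r s N ->
  \rank (lower_block r s M0) = s ->
  (\rank (tail_selection n s *m N^T) + s <= u)%N.
Proof.
move=> t_inj rkM0 rk_comb zM0 zN rkB.
set Lr := rowsub (@low_idx m r) (1%:M : 'M[K]_m).
set Ws := colsub (@widen_ord s n (ltn_ord s)) (1%:M : 'M[K]_n).
have lowerE X : lower_block r s X = Lr *m X *m Ws.
  by rewrite mulmx_selection; apply/matrixP => i j; rewrite !mxE.
have s_le_u : (s <= u)%N.
  by rewrite -rkB lowerE; apply: leq_trans (mxrank_sandwich _ _ _) rkM0.
rewrite leqNgt; apply/negP => too_big.
have [d d_s] : exists d, (d + s = u.+1)%N by exists (u.+1 - s)%N; lia.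
have [f0 [g0 unitB]] : exists (f : 'I_s -> 'I_(m - r)) (g : 'I_s -> 'I_s),
    mxsub f g (lower_block r s M0) \in unitmx.
  by apply: invertible_submx; rewrite rkB.
have [h [g unitN]] : exists (h : 'I_d -> 'I_(n - s)) (g : 'I_d -> 'I_m),
    mxsub h g (tail_selection n s *m N^T) \in unitmx.
  by apply: invertible_submx; lia.
(* Z X is the square submatrix of X on the rows g, r + f0 and on the columns
   s + h, g0; it is block upper triangular when X has a zero corner. *)
set R1 := (colsub g (1%:M : 'M[K]_m))^T.
set C1 := (tail_selection n s)^T *m (rowsub h (1%:M : 'M[K]_(n - s)))^T.
set R2 := rowsub f0 (1%:M : 'M[K]_(m - r)) *m Lr.
set C2 := Ws *m colsub g0 (1%:M : 'M[K]_s).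
pose Z (X : 'M[K]_(m, n)) : 'M[K]_(d + s) := col_mx R1 R2 *m X *m row_mx C1 C2.
have Z_block X : Z X =
    block_mx (R1 *m X *m C1) (R1 *m X *m C2) (R2 *m X *m C1) (R2 *m X *m C2).
  by rewrite /Z mul_col_mx mul_mx_row !mul_col_mx block_mxEh.
have Z_corner X : lower_right_zero r s X -> R2 *m X *m C1 = 0.
  move=> zX; have -> : R2 *m X *m C1 =
      rowsub f0 1%:M *m (Lr *m X *m (tail_selection n s)^T) *m (rowsub h 1%:M)^T.
    by rewrite /R2 /C1 !mulmxA.
  have -> : Lr *m X *m (tail_selection n s)^T = 0; last by rewrite mulmx0 mul0mx.
  rewrite /tail_selection trmx_mxsub trmx1 /Lr mulmx_selection.
  by apply/matrixP => i j; rewrite !mxE; apply: zX => /=; rewrite leq_addr.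
have det_Z X : (\rank X <= u)%N -> \det (Z X) = 0.
  move=> rkX; apply: det_eq0_rank_lt; rewrite /Z.
  have := mxrank_sandwich (col_mx R1 R2) X (row_mx C1 C2); lia.
have Z_pencil_singular c : \det (c *: Z M0 + Z N) = 0.
  by rewrite /Z scalemxAl scalemxAr -mulmxDl -mulmxDr det_Z.
have t'_inj : injective (t \o cast_ord d_s) by apply: inj_comp => //; exact: cast_ord_inj.
have := det_pencil_eq0 t'_inj (det_Z _ rkM0) (fun i => Z_pencil_singular _).
rewrite !Z_block (Z_corner _ zM0) (Z_corner _ zN) det_pencil_ublock.
move/eqP; apply/negP; rewrite mulf_eq0 negb_or; apply/andP; split.
- apply: det_pencil_neq0_const; rewrite -unitmx_tr.
  suff -> : (R1 *m N *m C1)^T = mxsub h g (tail_selection n s *m N^T) by [].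
  by rewrite -mulmx_selection !trmx_mul !trmxK /R1 /C1 !mulmxA.
- apply: det_pencil_neq0_lead.
  suff -> : R2 *m M0 *m C2 = mxsub f0 g0 (lower_block r s M0) by [].
  by rewrite lowerE -mulmx_selection /R2 /C2 !mulmxA.
Qed.

End RightColumns.

Section Spaces.
Variables (K : fieldType) (m n : nat).

Lemma inS_comb (k : nat) (S : 'M[K]_(k, m * n)) (M N : 'M[K]_(m, n)) (c : K) :
  inS S M -> inS S N -> inS S (c *: M + N).
Proof. by rewrite /inS linearP => SM SN; rewrite addmx_sub ?scalemx_sub. Qed.

(* Equivalent spaces have the same rank bounds: N = P^-1 (P N Q) Q^-1. *)
Lemma equiv_rank_le (k k' u : nat) (S : 'M[K]_(k, m * n)) (S' : 'M[K]_(k', m * n)) :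
  mxspace_equiv S S' -> (forall M, inS S M -> (\rank M <= u)%N) ->
  forall N, inS S' N -> (\rank N <= u)%N.
Proof.
move=> [P [Q [P_unit [Q_unit S_eq]]]] rkS N S'N.
have SM : inS S (P *m N *m Q) by apply/S_eq; exists N.
have -> : N = invmx P *m (P *m N *m Q) *m invmx Q.
  by rewrite !mulmxA mulmxK // mulVmx // mul1mx.
exact: leq_trans (mxrank_sandwich _ _ _) (rkS _ SM).
Qed.

Lemma defect_index_urk (k u : nat) (S : 'M[K]_(k, m * n)) :
  is_urk S u -> defect_index S (n - u).
Proof.
move=> [[M1 SM1 rkM1] rkS]; split.
  by move=> M SM; rewrite mxrank_ker mxrank_tr; have := rkS M SM; lia.
by move=> c defS; have := defS M1 SM1; rewrite mxrank_ker mxrank_tr rkM1.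
Qed.

(* The hyperplane Q^-T {x | x_0 = 0}, spanned by the rows of this matrix. *)
Definition coord_hyperplane (Q : 'M[K]_n) : 'M[K]_n := copid_mx 1 *m invmx Q^T.

Lemma rank_coord_hyperplane (Q : 'M[K]_n) :
  (0 < n)%N -> Q \in unitmx -> \rank (coord_hyperplane Q) = n.-1.
Proof.
move=> n_gt0 Q_unit; rewrite mxrankMfree ?row_free_unit ?unitmx_inv ?unitmx_tr //.
by rewrite rank_copid_mx ?subn1.
Qed.

Lemma tail_selection_sub_copid (s : nat) :
  (0 < s)%N -> (tail_selection K n s <= copid_mx 1)%MS.
Proof.
move=> s_gt0; apply/submxP; exists (tail_selection K n s); apply/matrixP => i j.
rewrite /tail_selection mul_rowsub_mx mul1mx !mxE /=.
by rewrite ltnNge (leq_trans s_gt0 (leq_addr _ _)) andbF subr0.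
Qed.

(* The kernel of P N Q contains Q^-T applied to the kernel of N restricted to
   the coordinates s, ..., n-1; for s > 0 this lies in the hyperplane. *)
Lemma kernel_meets_coord_hyperplane (s : nat) (P : 'M[K]_m) (Q : 'M[K]_n)
    (N : 'M[K]_(m, n)) :
  (0 < s)%N -> Q \in unitmx ->
  (n - s - \rank (tail_selection K n s *m N^T) <=
   \rank (kermx (P *m N *m Q)^T :&: coord_hyperplane Q))%N.
Proof.
move=> s_gt0 Q_unit; set J := tail_selection K n s; set G := J *m N^T.
have J_free : row_free J.
  by apply: row_free_selection => x y /(congr1 val) /= /addnI /val_inj.
set Y := kermx G *m J *m invmx Q^T.
have Y_sub : (Y <= kermx (P *m N *m Q)^T :&: coord_hyperplane Q)%MS.
  rewrite sub_capmx; apply/andP; split.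
    apply/sub_kermxP; rewrite /Y !trmx_mul !mulmxA mulmxKV ?unitmx_tr //.
    by rewrite -(mulmxA (kermx G)) -/G mulmx_ker mul0mx.
  apply: submxMr; apply: submx_trans (submxMl _ _) _.
  exact: tail_selection_sub_copid.
apply: leq_trans (mxrankS Y_sub).
rewrite /Y mxrankMfree ?row_free_unit ?unitmx_inv ?unitmx_tr //.
by rewrite mxrankMfree // mxrank_ker.
Qed.

End Spaces.

Theorem mainTheorem12 (K : fieldType) (m n k : nat) (S : 'M[K]_(k, m * n)) :
  semi_primitive S ->
  (exists r, is_urk S r /\ card_gt K r) ->
  (0 < n)%N ->
  column_property S.
Proof.
move=> [_ no_defective_hyperplane] [u [urk [t t_inj]]] n_gt0 r s s_gt0 k' S'
  equiv decS' M0 S'M0 full_lower.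
have [P [Q [_ [Q_unit S_eq]]]] := equiv.
have rkS' := equiv_rank_le equiv (proj2 urk).
apply: (no_defective_hyperplane _ (defect_index_urk urk) _
  (rank_coord_hyperplane n_gt0 Q_unit)) => M SM.
have [N S'N ->] := proj1 (S_eq M) SM.
have bound := right_columns_rank_bound t_inj (rkS' _ S'M0)
  (fun c => rkS' _ (inS_comb c S'M0 S'N)) (decS' _ S'M0) (decS' _ S'N)
  full_lower.
apply: leq_trans (kernel_meets_coord_hyperplane P N s_gt0 Q_unit); lia.
Qed.
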